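(* Every simple $\mathcal K_{m,n}$-module is strictly simple, i.e. it has no $\mathcal K_{m,n}$-invariant subspaces (graded or not) other than $0$ and itself.
   Context: Fix $(m,n)\in\mathbb Z_+^2\setminus\{(0,0)\}$. $\mathcal K_{m,n}$ is the Weyl superalgebra: the associative superalgebra generated by even elements $t_1,\dots,t_m,\partial_{t_1},\dots,\partial_{t_m}$ and odd elements $\xi_1,\dots,\xi_n,\partial_{\xi_1},\dots,\partial_{\xi_n}$, acting as multiplication and (super)derivation operators on $\mathbb C[t_1,\dots,t_m]\otimes\Lambda(\xi_1,\dots,\xi_n)$ (equivalently, the subalgebra of $\bar U$ generated by $A$ and $\Delta$). Modules are $\mathbb Z_2$-graded, and ''simple'' means having no nontrivial $\mathbb Z_2$-graded submodules. *)

From HB Require Import structures.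
From mathcomp Require Import all_boot all_algebra.
From mathcomp Require Import complex.
From mathcomp Require Import reals Rstruct.
Set Implicit Arguments. Unset Strict Implicit. Unset Printing Implicit Defensive.
Import GRing.Theory.
Local Open Scope ring_scope.

Definition CC : fieldType := complex Rdefinitions.R.

Section KModules.
Variables (m n : nat) (V : lmodType CC).

Definition is_subspace (W : V -> Prop) : Prop :=
  W 0 /\ (forall (a : CC) (u v : V), W u -> W v -> W (a *: u + v)).

(* A Z_2-graded K_{m,n}-module structure on the vector space V:
   V = V0 (+) V1, even generators t_i, d/dt_i, odd generators xi_j, d/dxi_j,
   acting by linear operators of the right parity and satisfying the
   defining (super-commutator) relations of the Weyl superalgebra K_{m,n}. *)
Record Kmodule := {
  V0 : V -> Prop;
  V1 : V -> Prop;
  V0_sub : is_subspace V0;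
  V1_sub : is_subspace V1;
  V_sum : forall v, exists v0 v1, V0 v0 /\ V1 v1 /\ v = v0 + v1;
  V_direct : forall v, V0 v -> V1 v -> v = 0;
  opt : 'I_m -> V -> V;
  opdt : 'I_m -> V -> V;
  opx : 'I_n -> V -> V;
  opdx : 'I_n -> V -> V;
  opt_lin : forall i, linear (opt i);
  opdt_lin : forall i, linear (opdt i);
  opx_lin : forall j, linear (opx j);
  opdx_lin : forall j, linear (opdx j);
  opt_even : forall i v, (V0 v -> V0 (opt i v)) /\ (V1 v -> V1 (opt i v));
  opdt_even : forall i v, (V0 v -> V0 (opdt i v)) /\ (V1 v -> V1 (opdt i v));
  opx_odd : forall j v, (V0 v -> V1 (opx j v)) /\ (V1 v -> V0 (opx j v));
  opdx_odd : forall j v, (V0 v -> V1 (opdx j v)) /\ (V1 v -> V0 (opdx j v));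
  rel_tt : forall i k v, opt i (opt k v) = opt k (opt i v);
  rel_dtdt : forall i k v, opdt i (opdt k v) = opdt k (opdt i v);
  rel_dtt : forall i k v,
    opdt i (opt k v) - opt k (opdt i v) = (i == k)%:R *: v;
  rel_xx : forall j l v, opx j (opx l v) + opx l (opx j v) = 0;
  rel_dxdx : forall j l v, opdx j (opdx l v) + opdx l (opdx j v) = 0;
  rel_dxx : forall j l v,
    opdx j (opx l v) + opx l (opdx j v) = (j == l)%:R *: v;
  rel_tx : forall i j v, opt i (opx j v) = opx j (opt i v);
  rel_tdx : forall i j v, opt i (opdx j v) = opdx j (opt i v);
  rel_dtx : forall i j v, opdt i (opx j v) = opx j (opdt i v);
  rel_dtdx : forall i j v, opdt i (opdx j v) = opdx j (opdt i v)
}.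

Variable M : Kmodule.

Definition is_submodule (W : V -> Prop) : Prop :=
  is_subspace W /\
  (forall i v, W v -> W (opt M i v)) /\
  (forall i v, W v -> W (opdt M i v)) /\
  (forall j v, W v -> W (opx M j v)) /\
  (forall j v, W v -> W (opdx M j v)).

(* W is Z_2-graded: W = (W /\ V0) (+) (W /\ V1). *)
Definition is_graded (W : V -> Prop) : Prop :=
  forall v0 v1, V0 M v0 -> V1 M v1 -> W (v0 + v1) -> W v0 /\ W v1.

Definition is_zero_sub (W : V -> Prop) : Prop := forall v, W v -> v = 0.
Definition is_full_sub (W : V -> Prop) : Prop := forall v, W v.

Definition simple_Kmodule : Prop :=
  (exists v : V, v != 0) /\
  forall W, is_submodule W -> is_graded W -> is_zero_sub W \/ is_full_sub W.

Definition strictly_simple_Kmodule : Prop :=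
  forall W, is_submodule W -> is_zero_sub W \/ is_full_sub W.

End KModules.

From HB Require Import structures.
From mathcomp Require Import all_boot all_algebra complex.
From mathcomp Require Import reals Rstruct.
Import GRing.Theory Num.Theory.
Set Implicit Arguments. Unset Strict Implicit. Unset Printing Implicit Defensive.
Local Open Scope ring_scope.

(* For each odd index j, the pair (xi_j, d/dxi_j) generates a
   Clifford algebra, and its "sign" Q_j = xi_j d_j - d_j xi_j is an involution
   that anticommutes with xi_j and d_j and commutes with everything else.  The
   product P = Q_1 ... Q_n is therefore an involution of V, built from the
   action, which commutes with the even generators, anticommutes with the odd
   ones and preserves the grading.  The vectors on which P acts as the parity
   operator e(v0 + v1) = v0 - v1 form a graded submodule; by simplicity it is
   0 or V, so P = -e or P = e.  Hence every submodule W, being stable under P,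
   is stable under e, i.e. graded, and simplicity concludes. *)

(* 2 is invertible in C: this is what lets us split v into graded parts. *)
Lemma two_neq0 : (2 : CC) != 0.
Proof. by rewrite (pnatr_eq0 (complex Rdefinitions.R) 2). Qed.

Section CliffordSign.
Variables (R : pzRingType) (V : lmodType R) (a b : {linear V -> V}).
Hypotheses (aa : forall v, a (a v) = 0) (bb : forall v, b (b v) = 0)
  (ab_ba : forall v, a (b v) + b (a v) = v).

Definition clifford_sign (v : V) : V := a (b v) - b (a v).

Lemma clifford_sign_is_linear : linear clifford_sign.
Proof.
move=> c u v; rewrite /clifford_sign (linearP b) (linearP a) (linearP a) (linearP b).
by rewrite scalerBr addrACA opprD.
Qed.

HB.instance Definition _ :=
  GRing.isLinear.Build R V V *:%R clifford_sign clifford_sign_is_linear.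

Lemma aba v : a (b (a v)) = a v.
Proof. by rewrite -[in RHS](ab_ba (a v)) aa linear0 addr0. Qed.

Lemma bab v : b (a (b v)) = b v.
Proof. by rewrite -[in RHS](ab_ba (b v)) bb linear0 add0r. Qed.

Lemma clifford_sign_a v : clifford_sign (a v) = - a (clifford_sign v).
Proof. by rewrite /clifford_sign aba aa linear0 subr0 linearB aa aba sub0r opprK. Qed.

Lemma clifford_sign_b v : clifford_sign (b v) = - b (clifford_sign v).
Proof. by rewrite /clifford_sign bb linear0 bab linearB bab bb sub0r subr0. Qed.

(* The sign is an involution: on the decomposition v = ab v + ba v it is 1, -1. *)
Lemma clifford_sign_invol v : clifford_sign (clifford_sign v) = v.
Proof.
have bQ : b (clifford_sign v) = b v by rewrite linearB bab bb subr0.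
have aQ : a (clifford_sign v) = - a v by rewrite linearB aa aba sub0r.
by rewrite {1}/clifford_sign bQ aQ linearN opprK.
Qed.

Lemma clifford_sign_comm (c : {additive V -> V}) v :
  (forall w, c (a w) = a (c w)) -> (forall w, c (b w) = b (c w)) ->
  clifford_sign (c v) = c (clifford_sign v).
Proof. by move=> ca cb; rewrite /clifford_sign raddfB !ca !cb !ca. Qed.

Lemma clifford_sign_anticomm (c : {additive V -> V}) v :
  (forall w, c (a w) = - a (c w)) -> (forall w, c (b w) = - b (c w)) ->
  clifford_sign (c v) = c (clifford_sign v).
Proof.
by move=> ca cb; rewrite /clifford_sign raddfB !ca !cb !linearN !ca !opprK linearN.
Qed.

End CliffordSign.

Section SignProduct.
Variables (R : pzRingType) (V : lmodType R) (I : eqType) (Q : I -> {linear V -> V}).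

Fixpoint sign_prod (s : seq I) (v : V) : V :=
  if s is j :: s' then Q j (sign_prod s' v) else v.

Lemma sign_prod_is_linear s : linear (sign_prod s).
Proof. by elim: s => [//|j s IH] c u v /=; rewrite IH linearP. Qed.

HB.instance Definition _ s :=
  GRing.isLinear.Build R V V *:%R (sign_prod s) (sign_prod_is_linear s).

Lemma sign_prod_stable (S : V -> Prop) s v :
  (forall j w, S w -> S (Q j w)) -> S v -> S (sign_prod s v).
Proof. by move=> SQ Sv; elim: s => [//|j s IH] /=; apply: SQ. Qed.

Lemma sign_prod_comm (c : V -> V) s v :
  (forall j w, Q j (c w) = c (Q j w)) -> sign_prod s (c v) = c (sign_prod s v).
Proof. by move=> cQ; elim: s => [//|j s IH] /=; rewrite IH cQ. Qed.

Lemma sign_prod_anticomm (c : V -> V) l s v :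
  (forall w, Q l (c w) = - c (Q l w)) ->
  (forall j w, j != l -> Q j (c w) = c (Q j w)) ->
  sign_prod s (c v) = (-1) ^+ count_mem l s *: c (sign_prod s v).
Proof.
move=> cQl cQ; elim: s => [|j s IH] /=; first by rewrite scale1r.
rewrite IH linearZ; case: (eqVneq j l) => [->|ne] /=.
  by rewrite cQl exprS -scalerA scaleN1r scalerN.
by rewrite cQ.
Qed.

Lemma sign_prod_invol s v :
  (forall j w, Q j (Q j w) = w) -> (forall j k w, Q j (Q k w) = Q k (Q j w)) ->
  sign_prod s (sign_prod s v) = v.
Proof.
move=> QQ Qcomm; elim: s => [//|j s IH] /=.
by rewrite (sign_prod_comm (c := Q j)) ?QQ // => k w; rewrite Qcomm.
Qed.

End SignProduct.

Section Subspaces.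
Variable V : lmodType CC.
Implicit Types (W : V -> Prop) (u v : V).

Lemma subspaceD W u v : is_subspace W -> W u -> W v -> W (u + v).
Proof. by case=> _ WZD Wu Wv; rewrite -[u]scale1r; apply: WZD. Qed.

Lemma subspaceZ W c u : is_subspace W -> W u -> W (c *: u).
Proof. by case=> W0 WZD Wu; rewrite -[c *: u]addr0; apply: WZD. Qed.

Lemma subspaceN W u : is_subspace W -> W u -> W (- u).
Proof. by move=> WS Wu; rewrite -scaleN1r; apply: subspaceZ. Qed.

Lemma subspaceB W u v : is_subspace W -> W u -> W v -> W (u - v).
Proof. by move=> WS Wu Wv; apply: subspaceD => //; apply: subspaceN. Qed.

Lemma double_eq0 v : v + v = 0 -> v = 0.
Proof.
by move/eqP; rewrite -mulr2n -scaler_nat scaler_eq0 (negbTE two_neq0) => /eqP.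
Qed.

Lemma half_sum_diff u v :
  (2 : CC)^-1 *: ((u + v) + (u - v)) = u /\ (2 : CC)^-1 *: ((u + v) - (u - v)) = v.
Proof.
have half w : (2 : CC)^-1 *: (w + w) = w.
  by rewrite -mulr2n -[w *+ 2]scaler_nat scalerA mulVf ?two_neq0 // scale1r.
by rewrite addrACA subrr addr0 opprB addrC addrA addrNK !half.
Qed.

End Subspaces.

Section Kmodules.
Variables (m n : nat) (V : lmodType CC) (M : Kmodule m n V).
Local Notation x := (opx M).
Local Notation dx := (opdx M).
Local Notation V0 := (V0 M).
Local Notation V1 := (V1 M).

HB.instance Definition _ i := GRing.isLinear.Build CC V V *:%R (opt M i) (opt_lin M i).
HB.instance Definition _ i := GRing.isLinear.Build CC V V *:%R (opdt M i) (opdt_lin M i).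
HB.instance Definition _ j := GRing.isLinear.Build CC V V *:%R (x j) (opx_lin M j).
HB.instance Definition _ j := GRing.isLinear.Build CC V V *:%R (dx j) (opdx_lin M j).

Lemma opx_sq j v : x j (x j v) = 0.
Proof. by apply: double_eq0; rewrite rel_xx. Qed.

Lemma opdx_sq j v : dx j (dx j v) = 0.
Proof. by apply: double_eq0; rewrite rel_dxdx. Qed.

Lemma opx_opdx j v : x j (dx j v) + dx j (x j v) = v.
Proof. by rewrite addrC rel_dxx eqxx scale1r. Qed.

Local Notation odd_sign j := (clifford_sign (x j) (dx j)).

Lemma odd_sign_invol j v : odd_sign j (odd_sign j v) = v.
Proof. exact: clifford_sign_invol (opx_sq j) (opdx_sq j) (opx_opdx j) v. Qed.

Lemma odd_sign_even (c : {linear V -> V}) j v :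
  (forall l w, c (x l w) = x l (c w)) -> (forall l w, c (dx l w) = dx l (c w)) ->
  odd_sign j (c v) = c (odd_sign j v).
Proof. by move=> cx cdx; apply: clifford_sign_comm; [apply: cx | apply: cdx]. Qed.

Lemma opx_anticomm j l w : x j (x l w) = - x l (x j w).
Proof. by apply/eqP; rewrite -addr_eq0 rel_xx. Qed.

Lemma opdx_anticomm j l w : dx j (dx l w) = - dx l (dx j w).
Proof. by apply/eqP; rewrite -addr_eq0 rel_dxdx. Qed.

Lemma opdx_opx_anticomm j l w : j != l -> dx j (x l w) = - x l (dx j w).
Proof. by move/negbTE=> jl; apply/eqP; rewrite -addr_eq0 rel_dxx jl scale0r. Qed.

Lemma odd_sign_opx j l v :
  odd_sign j (x l v) = (if j == l then - x l (odd_sign j v) else x l (odd_sign j v)).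
Proof.
case: (eqVneq j l) => [<-|ne]; first exact: clifford_sign_a (opx_sq j) (opx_opdx j) v.
apply: clifford_sign_anticomm => w /=; first exact: opx_anticomm.
by rewrite opdx_opx_anticomm // opprK.
Qed.

Lemma odd_sign_opdx j l v :
  odd_sign j (dx l v) = (if j == l then - dx l (odd_sign j v) else dx l (odd_sign j v)).
Proof.
case: (eqVneq j l) => [<-|ne]; first exact: clifford_sign_b (opdx_sq j) (opx_opdx j) v.
apply: clifford_sign_anticomm => w /=; last exact: opdx_anticomm.
by rewrite opdx_opx_anticomm // eq_sym.
Qed.

Lemma odd_sign_comm j k v : odd_sign j (odd_sign k v) = odd_sign k (odd_sign j v).
Proof.
case: (eqVneq j k) => [->//|ne].
apply: esym; apply: clifford_sign_comm => w /=.
  by rewrite odd_sign_opx (negbTE ne).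
by rewrite odd_sign_opdx (negbTE ne).
Qed.

Lemma odd_sign_stable (S : V -> Prop) j v : is_subspace S ->
  (forall w, S w -> S (x j (dx j w))) -> (forall w, S w -> S (dx j (x j w))) ->
  S v -> S (odd_sign j v).
Proof. by move=> SS Sxd Sdx Sv; apply: subspaceB; [|apply: Sxd|apply: Sdx]. Qed.

Lemma V0_0 : V0 0. Proof. by case: (V0_sub M). Qed.
Lemma V1_0 : V1 0. Proof. by case: (V1_sub M). Qed.

Lemma graded_decomp_unique v0 v1 w0 w1 : V0 v0 -> V1 v1 -> V0 w0 -> V1 w1 ->
  v0 + v1 = w0 + w1 -> v0 = w0 /\ v1 = w1.
Proof.
move=> v0e v1o w0e w1o e.
have d : v0 - w0 = w1 - v1.
  by rewrite -[v0](addrK v1) e addrAC [w0 + w1]addrC addrK.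
have d0 : v0 - w0 = 0.
  apply: (@V_direct _ _ _ M); first exact: subspaceB (V0_sub M) v0e w0e.
  by rewrite d; exact: subspaceB (V1_sub M) w1o v1o.
have e0 : v0 = w0 by apply/eqP; rewrite -subr_eq0 d0.
by split=> //; move: e; rewrite e0 => /addrI.
Qed.

Section ParityInvolution.
Variable P : {linear V -> V}.
Hypotheses (P_V0 : forall v, V0 v -> V0 (P v)) (P_V1 : forall v, V1 v -> V1 (P v))
  (P_invol : forall v, P (P v) = v)
  (P_opt : forall i v, P (opt M i v) = opt M i (P v))
  (P_opdt : forall i v, P (opdt M i v) = opdt M i (P v))
  (P_opx : forall j v, P (x j v) = - x j (P v))
  (P_opdx : forall j v, P (dx j v) = - dx j (P v)).

Definition parity_match (v : V) : Prop :=
  exists v0 v1, [/\ V0 v0, V1 v1, v = v0 + v1 & P v = v0 - v1].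

Lemma parity_match_even (f : {linear V -> V}) v :
  (forall w, V0 w -> V0 (f w)) -> (forall w, V1 w -> V1 (f w)) ->
  (forall w, P (f w) = f (P w)) -> parity_match v -> parity_match (f v).
Proof.
move=> f0 f1 fP [v0 [v1 [v0e v1o -> Pv]]].
by exists (f v0), (f v1); rewrite fP Pv linearB linearD; split; auto.
Qed.

Lemma parity_match_odd (f : {linear V -> V}) v :
  (forall w, V0 w -> V1 (f w)) -> (forall w, V1 w -> V0 (f w)) ->
  (forall w, P (f w) = - f (P w)) -> parity_match v -> parity_match (f v).
Proof.
move=> f0 f1 fP [v0 [v1 [v0e v1o -> Pv]]].
by exists (f v1), (f v0); rewrite fP Pv linearB linearD opprB addrC; split; auto.
Qed.

Lemma parity_match_submodule : is_submodule M parity_match.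
Proof.
have V0s := V0_sub M; have V1s := V1_sub M.
split; [split|].
- by exists 0, 0; rewrite linear0 addr0 subr0; split=> //; [exact: V0_0 | exact: V1_0].
- move=> c _ _ [u0 [u1 [u0e u1o -> Pu]]] [v0 [v1 [v0e v1o -> Pv]]].
  exists (c *: u0 + v0), (c *: u1 + v1); split.
  + by apply: (subspaceD V0s) => //; apply: subspaceZ.
  + by apply: (subspaceD V1s) => //; apply: subspaceZ.
  + by rewrite scalerDr addrACA.
  + by rewrite linearP Pu Pv scalerBr addrACA opprD.
split; [|split; [|split]] => i v.
- by apply: parity_match_even => w;
    [apply: (opt_even M i w).1 | apply: (opt_even M i w).2 | apply: P_opt].
- by apply: parity_match_even => w;
    [apply: (opdt_even M i w).1 | apply: (opdt_even M i w).2 | apply: P_opdt].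
- by apply: parity_match_odd => w;
    [apply: (opx_odd M i w).1 | apply: (opx_odd M i w).2 | apply: P_opx].
- by apply: parity_match_odd => w;
    [apply: (opdx_odd M i w).1 | apply: (opdx_odd M i w).2 | apply: P_opdx].
Qed.

Lemma parity_match_graded : is_graded M parity_match.
Proof.
move=> v0 v1 v0e v1o [w0 [w1 [w0e w1o e]]].
have [<- <-] := graded_decomp_unique v0e v1o w0e w1o e; rewrite linearD => Pe.
have v1o' : V1 (- v1) by apply: subspaceN (V1_sub M) v1o.
have [Pv0 Pv1] := graded_decomp_unique (P_V0 v0e) (P_V1 v1o) v0e v1o' Pe.
split; [exists v0, 0 | exists 0, v1]; split; rewrite ?addr0 ?add0r ?subr0 ?sub0r //;
  exact: V0_0 || exact: V1_0.
Qed.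

(* Simplicity forces the parity-matching submodule to be 0 (P = -e) or V (P = e). *)
Lemma parity_involution_sign : simple_Kmodule M ->
  (forall v0 v1, V0 v0 -> V1 v1 -> P (v0 + v1) = v0 - v1) \/
  (forall v0 v1, V0 v0 -> V1 v1 -> P (v0 + v1) = v1 - v0).
Proof.
move=> [_ simpleM].
case: (simpleM _ parity_match_submodule parity_match_graded) => [zero|full];
  [right|left] => v0 v1 v0e v1o; last first.
  have [w0 [w1 [w0e w1o e]]] := full (v0 + v1).
  by have [<- <-] := graded_decomp_unique v0e v1o w0e w1o e.
have Pv0 : v0 + P v0 = 0.
  apply: zero; exists (v0 + P v0), 0; split; rewrite ?addr0 ?subr0 //.
  - exact: subspaceD (V0_sub M) v0e (P_V0 v0e).
  - exact: V1_0.
  - by rewrite linearD P_invol addrC.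
have Pv1 : v1 - P v1 = 0.
  apply: zero; exists 0, (v1 - P v1); split; rewrite ?add0r ?sub0r //.
  - exact: V0_0.
  - exact: subspaceB (V1_sub M) v1o (P_V1 v1o).
  - by rewrite linearB P_invol opprB.
move/eqP: Pv0; rewrite addrC addr_eq0 => /eqP Pv0.
by rewrite linearD Pv0 -(subr0_eq Pv1) addrC.
Qed.
End ParityInvolution.

Lemma graded_of_parity_stable (W : V -> Prop) : is_subspace W ->
  (forall v0 v1, V0 v0 -> V1 v1 -> W (v0 + v1) -> W (v0 - v1)) -> is_graded M W.
Proof.
move=> WS Wpar v0 v1 v0e v1o Wv; have [half0 half1] := half_sum_diff v0 v1.
by split; [rewrite -half0 | rewrite -half1]; apply: subspaceZ => //;
  [apply: subspaceD | apply: subspaceB] => //; apply: Wpar.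
Qed.

(* P = Q_1 ... Q_n, an element of the image of K_{m,n} acting on V. *)
Definition parity_op : V -> V :=
  sign_prod (fun j => clifford_sign (x j) (dx j)) (enum 'I_n).
HB.instance Definition _ := GRing.Linear.on parity_op.

Lemma parity_op_invol v : parity_op (parity_op v) = v.
Proof. by apply: sign_prod_invol => *; [apply: odd_sign_invol | apply: odd_sign_comm]. Qed.

Lemma parity_op_even (c : {linear V -> V}) v :
  (forall l w, c (x l w) = x l (c w)) -> (forall l w, c (dx l w) = dx l (c w)) ->
  parity_op (c v) = c (parity_op v).
Proof. by move=> cx cdx; apply: sign_prod_comm => j w; apply: odd_sign_even. Qed.

(* Each index occurs exactly once in P, so the odd generators pick up one sign. *)
Lemma parity_op_opx l v : parity_op (x l v) = - x l (parity_op v).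
Proof.
rewrite /parity_op (sign_prod_anticomm (l := l)) => [|w|j w ne] /=.
- by rewrite count_uniq_mem ?enum_uniq // mem_enum expr1 scaleN1r.
- by rewrite odd_sign_opx eqxx.
- by rewrite odd_sign_opx (negbTE ne).
Qed.

Lemma parity_op_opdx l v : parity_op (dx l v) = - dx l (parity_op v).
Proof.
rewrite /parity_op (sign_prod_anticomm (l := l)) => [|w|j w ne] /=.
- by rewrite count_uniq_mem ?enum_uniq // mem_enum expr1 scaleN1r.
- by rewrite odd_sign_opdx eqxx.
- by rewrite odd_sign_opdx (negbTE ne).
Qed.

Lemma parity_op_stable (S : V -> Prop) v : is_subspace S ->
  (forall j w, S w -> S (x j (dx j w))) -> (forall j w, S w -> S (dx j (x j w))) ->
  S v -> S (parity_op v).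
Proof.
move=> SS Sxd Sdx; apply: sign_prod_stable => j w Sw.
by apply: odd_sign_stable => //; [apply: Sxd | apply: Sdx].
Qed.

Lemma parity_op_sign : simple_Kmodule M ->
  (forall v0 v1, V0 v0 -> V1 v1 -> parity_op (v0 + v1) = v0 - v1) \/
  (forall v0 v1, V0 v0 -> V1 v1 -> parity_op (v0 + v1) = v1 - v0).
Proof.
apply: parity_involution_sign => [v v0e|v v1o|v|i v|i v|j v|j v].
- apply: parity_op_stable (V0_sub M) _ _ v0e => j w w0e.
    by apply: (opx_odd M j _).2; apply: (opdx_odd M j w).1.
  by apply: (opdx_odd M j _).2; apply: (opx_odd M j w).1.
- apply: parity_op_stable (V1_sub M) _ _ v1o => j w w1o.
    by apply: (opx_odd M j _).1; apply: (opdx_odd M j w).2.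
  by apply: (opdx_odd M j _).1; apply: (opx_odd M j w).2.
- exact: parity_op_invol.
- by apply: parity_op_even => l w /=; rewrite ?rel_tx ?rel_tdx.
- by apply: parity_op_even => l w /=; rewrite ?rel_dtx ?rel_dtdx.
- exact: parity_op_opx.
- exact: parity_op_opdx.
Qed.

Lemma submodule_parity_op_stable (W : V -> Prop) v :
  is_submodule M W -> W v -> W (parity_op v).
Proof.
move=> [WS [_ [_ [Wx Wdx]]]]; apply: parity_op_stable => // j w Ww.
  by apply: Wx; apply: Wdx.
by apply: Wdx; apply: Wx.
Qed.
End Kmodules.

Theorem lemma3p3 (m n : nat) (Hmn : (0 < m + n)%N) (V : lmodType CC)
  (M : Kmodule m n V) :
  simple_Kmodule M -> strictly_simple_Kmodule M.
Proof.
move=> simpleM W WM; have [_ graded_trivial] := simpleM.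
apply: graded_trivial => //; have WS : is_subspace W := WM.1.
apply: graded_of_parity_stable => // v0 v1 v0e v1o Wv.
have := submodule_parity_op_stable WM Wv.
case: (parity_op_sign simpleM) => -> //.
by rewrite -opprB => /(subspaceN WS); rewrite opprK.
Qed.
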